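(* $\bigcup_k\mathfrak{L}(\mathrm{rtDBVA}(k))=\mathsf{S}^=_{\mathbb{Q}}$.
   Context: $\mathfrak{L}(A)$ denotes the class of languages recognized by machines of type $A$; the union ranges over $k\ge1$. A real-time deterministic blind vector automaton of dimension $k$ ($\mathrm{rtDBVA}(k)$) is a 6-tuple $(Q,\Sigma,\delta,q_0,Q_a,v)$ with finite state set $Q$, initial state $q_0$, accept states $Q_a$, initial row vector $v\in\mathbb{Q}^k$ (freely chosen), and $\delta:Q\times(\Sigma\cup\{\cent,\$\})\to Q\times S$, $S$ the set of $k\times k$ rational matrices; the input $w$ is read as $\cent w\$$ left to right, one symbol per step, and $\delta(q,\sigma)=(q',M)$ means that in state $q$ reading $\sigma$ the machine goes to $q'$ and multiplies its row vector on the right by $M$. The input is accepted iff after processing $\$$ the state is in $Q_a$ and the first vector entry equals $1$. A Turakainen finite automaton (TuFA) is $\mathcal{G}=(Q,\Sigma,\{A_\sigma\}_{\sigma\in\Sigma},v_0,f)$ where the $A_\sigma$ are $|Q|\times|Q|$ rational matrices, $v_0$ is a rational row vector and $f$ a rational column vector; for $w=w_1\cdots w_n\in\Sigma^*$, $f_{\mathcal{G}}(w)=v_0A_{w_1}\cdots A_{w_n}f$. $\mathsf{S}^=_{\mathbb{Q}}$ is the class of all languages of the form $\{w\in\Sigma^*\mid f_{\mathcal{G}}(w)=\lambda\}$ for some TuFA $\mathcal{G}$ and some $\lambda\in\mathbb{Q}$. *)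

From HB Require Import structures.
From mathcomp Require Import all_boot all_order all_algebra.
Set Implicit Arguments. Unset Strict Implicit. Unset Printing Implicit Defensive.
Import GRing.Theory Num.Theory.
Local Open Scope ring_scope.

Inductive tsym (S : Type) : Type :=
| Cent : tsym S
| Dollar : tsym S
| Sym : S -> tsym S.
Arguments Cent {S}. Arguments Dollar {S}.

(* Real-time deterministic blind vector automaton of dimension k.+1 (i.e. dimension >= 1),
   with finite state set Q, over input alphabet S.  The vector entries are rationals. *)
Record rtDBVA (S : Type) (Q : finType) (k : nat) := RtDBVA {
  dbva_delta : Q -> tsym S -> Q * 'M[rat]_(k.+1);
  dbva_q0 : Q;
  dbva_acc : {set Q};
  dbva_v : 'rV[rat]_(k.+1)
}.

Definition dbva_step S Q k (M : rtDBVA S Q k) (c : Q * 'rV[rat]_(k.+1)) (a : tsym S) :=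
  let: (q, v) := c in
  let: (q', A) := dbva_delta M q a in (q', v *m A).

Definition dbva_tape S (w : seq S) : seq (tsym S) := Cent :: rcons (map (@Sym S) w) Dollar.

Definition dbva_run S Q k (M : rtDBVA S Q k) (w : seq S) : Q * 'rV[rat]_(k.+1) :=
  foldl (dbva_step M) (dbva_q0 M, dbva_v M) (dbva_tape w).

Definition dbva_accepts S Q k (M : rtDBVA S Q k) (w : seq S) : Prop :=
  (dbva_run M w).1 \in dbva_acc M /\ (dbva_run M w).2 ord0 ord0 = 1.

(* Turakainen finite automaton with n states (Q identified with 'I_n). *)
Record TuFA (S : Type) (n : nat) := MkTuFA {
  tufa_A : S -> 'M[rat]_n;
  tufa_v0 : 'rV[rat]_n;
  tufa_f : 'cV[rat]_n
}.

Definition tufa_fun S n (G : TuFA S n) (w : seq S) : rat :=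
  (tufa_v0 G *m foldr (fun a P => tufa_A G a *m P) 1%:M w *m tufa_f G) ord0 ord0.

Definition in_union_rtDBVA (S : Type) (L : seq S -> Prop) : Prop :=
  exists (Q : finType) (k : nat) (M : rtDBVA S Q k), forall w, dbva_accepts M w <-> L w.

Definition in_S_eq_Q (S : Type) (L : seq S -> Prop) : Prop :=
  exists (n : nat) (G : TuFA S n) (lam : rat), forall w, L w <-> tufa_fun G w = lam.

From mathcomp Require Import all_boot all_order all_algebra.
Set Implicit Arguments. Unset Strict Implicit. Unset Printing Implicit Defensive.
Import GRing.Theory.
Local Open Scope ring_scope.

(* A DBVA with states Q and vectors of dimension k.+1 is simulated by a TuFA on
   the coordinates Q x 'I_k.+1: a configuration (q, u) becomes the row vector
   carrying u in the block of q and zeros elsewhere, so that each transition is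
   a fixed block matrix; acceptance (accepting final state and first entry 1)
   becomes "the output equals 1" by zeroing the final column on rejecting
   states.  Conversely a TuFA G with threshold lam is simulated by a one-state
   DBVA whose vector is (1, v0 A_w); on $ the first entry becomes
   (1 - lam) + f_G(w), which equals 1 exactly when f_G(w) = lam. *)

Lemma mulmx_foldr_foldl (R : pzRingType) (T : Type) m n (A : T -> 'M[R]_n)
    (v : 'M[R]_(m, n)) (w : seq T) :
  v *m foldr (fun a P => A a *m P) 1%:M w = foldl (fun v a => v *m A a) v w.
Proof.
elim: w v => [|a w IHw] v /=; first by rewrite mulmx1.
by rewrite mulmxA IHw.
Qed.

Lemma sum_enum_pair_fst (A B : finType) (V : nmodType) (a : A) (F : A -> B -> V) :
  \sum_(i < #|{: A * B}|)
     (if (enum_val i).1 == a then F (enum_val i).1 (enum_val i).2 else 0)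
  = \sum_(b : B) F a b.
Proof.
rewrite -(big_enum_val (A := {: A * B})
  (fun x : A * B => if x.1 == a then F x.1 x.2 else 0)) /=.
rewrite -(pair_bigA _ (fun (a' : A) (b : B) => if a' == a then F a' b else 0)) /=.
rewrite (bigD1 a) //= [X in _ + X]big1 ?addr0; last first.
  by move=> a' /negbTE neq_a'a; rewrite big1 // => b _; rewrite neq_a'a.
by apply: eq_bigr => b _; rewrite eqxx.
Qed.

Section DBVAtoTuFA.
Variables (S : finType) (Q : finType) (k : nat) (M : rtDBVA S Q k).

Local Notation n := #|{: Q * 'I_k.+1}|.
Local Notation coord i := (enum_val i : Q * 'I_k.+1).

Definition config_row (c : Q * 'rV[rat]_k.+1) : 'rV[rat]_n :=
  \row_i (if (coord i).1 == c.1 then c.2 0 (coord i).2 else 0).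

Definition transition_mx (a : tsym S) : 'M[rat]_n :=
  \matrix_(i, j) (if (dbva_delta M (coord i).1 a).1 == (coord j).1
                  then (dbva_delta M (coord i).1 a).2 (coord i).2 (coord j).2 else 0).

Definition acceptance_col : 'cV[rat]_n :=
  \col_i (if (dbva_delta M (coord i).1 Dollar).1 \in dbva_acc M
          then (dbva_delta M (coord i).1 Dollar).2 (coord i).2 0 else 0).

Lemma config_row_mul_block (q : Q) (u : 'rV[rat]_k.+1) (G : Q -> 'I_k.+1 -> rat) :
  \sum_(i < n) config_row (q, u) 0 i * G (coord i).1 (coord i).2
  = \sum_(r < k.+1) u 0 r * G q r.
Proof.
under eq_bigr => i _ do rewrite mxE /= (fun_if (fun x => x * _)) mul0r.
exact: (sum_enum_pair_fst q (fun q' r => u 0 r * G q' r)).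
Qed.

Lemma config_row_step c a :
  config_row c *m transition_mx a = config_row (dbva_step M c a).
Proof.
case: c => q u; rewrite /dbva_step.
apply/rowP => j; rewrite mxE.
under eq_bigr => i _ do rewrite [transition_mx a _ _]mxE.
rewrite (config_row_mul_block q u (fun q' r =>
  if (dbva_delta M q' a).1 == (coord j).1
  then (dbva_delta M q' a).2 r (coord j).2 else 0)).
case: (dbva_delta M q a) => q' B; rewrite !mxE /= eq_sym.
by case: eqP => // _; rewrite big1 // => r _; rewrite mulr0.
Qed.

Lemma config_row_accept c :
  (config_row c *m acceptance_col) 0 0 =
  if (dbva_step M c Dollar).1 \in dbva_acc M then (dbva_step M c Dollar).2 0 0 else 0.
Proof.
case: c => q u; rewrite /dbva_step mxE.
under eq_bigr => i _ do rewrite [acceptance_col _ _]mxE.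
rewrite (config_row_mul_block q u (fun q' r =>
  if (dbva_delta M q' Dollar).1 \in dbva_acc M
  then (dbva_delta M q' Dollar).2 r 0 else 0)).
case: (dbva_delta M q Dollar) => q' B; rewrite mxE /=.
by case: ifP => // _; rewrite big1 // => r _; rewrite mulr0.
Qed.

Lemma config_row_foldl c w :
  foldl (fun v a => v *m transition_mx (Sym a)) (config_row c) w
  = config_row (foldl (dbva_step M) c (map (@Sym S) w)).
Proof. by elim: w c => [|a w IHw] c //=; rewrite config_row_step IHw. Qed.

Definition tufa_of_dbva : TuFA S n :=
  MkTuFA (fun a => transition_mx (Sym a))
    (config_row (dbva_step M (dbva_q0 M, dbva_v M) Cent)) acceptance_col.

Lemma tufa_of_dbvaP w : dbva_accepts M w <-> tufa_fun tufa_of_dbva w = 1.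
Proof.
rewrite /tufa_fun /= mulmx_foldr_foldl config_row_foldl config_row_accept.
rewrite /dbva_accepts /dbva_run /dbva_tape /= foldl_rcons.
case: ifP => _; first by split => [[]|].
by split => [[]|/eqP]; rewrite // eq_sym oner_eq0.
Qed.

End DBVAtoTuFA.

Section TuFAtoDBVA.
Variables (S : finType) (n : nat) (G : TuFA S n) (lam : rat).

Definition letter_mx (a : S) : 'M[rat]_(1 + n) := block_mx 1%:M 0 0 (tufa_A G a).
Definition endmarker_mx : 'M[rat]_(1 + n) := block_mx (1 - lam)%:M 0 (tufa_f G) 0.

Definition dbva_of_tufa : rtDBVA S unit n :=
  RtDBVA (fun _ a => match a with
                     | Cent => (tt, 1%:M)
                     | Dollar => (tt, endmarker_mx)
                     | Sym b => (tt, letter_mx b)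
                     end)
    tt setT (row_mx 1 (tufa_v0 G)).

Lemma row_mx1_letter (v : 'rV[rat]_n) a :
  row_mx 1 v *m letter_mx a = row_mx 1 (v *m tufa_A G a).
Proof. by rewrite mul_row_block !mulmx0 addr0 add0r mulmx1. Qed.

Lemma row_mx1_endmarker (v : 'rV[rat]_n) :
  row_mx 1 v *m endmarker_mx = row_mx ((1 - lam)%:M + v *m tufa_f G) 0.
Proof. by rewrite mul_row_block !mulmx0 addr0 mul1mx. Qed.

Lemma row_mx00 (X : 'M[rat]_1) (Y : 'rV[rat]_n) : (row_mx X Y : 'rV_(1 + n)) 0 0 = X 0 0.
Proof.
have -> : (0 : 'I_(1 + n)) = lshift n 0 by apply: val_inj.
exact: row_mxEl.
Qed.

Lemma dbva_of_tufa_foldl (v : 'rV[rat]_n) w :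
  foldl (dbva_step dbva_of_tufa) (tt, row_mx 1 v) (map (@Sym S) w)
  = (tt, row_mx 1 (foldl (fun v a => v *m tufa_A G a) v w)).
Proof. by elim: w v => [|a w IHw] v //=; rewrite row_mx1_letter IHw. Qed.

Lemma dbva_of_tufaP w : dbva_accepts dbva_of_tufa w <-> tufa_fun G w = lam.
Proof.
rewrite /dbva_accepts /dbva_run /dbva_tape /= foldl_rcons mulmx1.
rewrite dbva_of_tufa_foldl /= row_mx1_endmarker row_mx00.
rewrite /tufa_fun mulmx_foldr_foldl !mxE /= in_setT mulr1n.
split => [[_ accept] | ->]; last by rewrite subrK.
by apply/(addrI (1 - lam)); rewrite accept subrK.
Qed.

End TuFAtoDBVA.

Theorem theorem10 (S : finType) (L : seq S -> Prop) :
  in_union_rtDBVA L <-> in_S_eq_Q L.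
Proof.
split.
- move=> [Q [k [M ML]]].
  exists _, (tufa_of_dbva M), 1 => w.
  exact: iff_trans (iff_sym (ML w)) (tufa_of_dbvaP M w).
- move=> [n [G [lam GL]]].
  exists unit, n, (dbva_of_tufa G lam) => w.
  exact: iff_trans (dbva_of_tufaP G lam w) (iff_sym (GL w)).
Qed.
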